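(* Let $k\in\mathbb N_0$. Let $S$ be the basic spinor representation of $Spin(3)$, realized as a $2$-dimensional irreducible left module over the complex Clifford algebra $\mathbb C_3$ (generated by $e_1,e_2,e_3$ with $e_je_l+e_le_j=-2\delta_{jl}$), and let $v^{\pm}$ be nonzero vectors with $-ie_{12}v^{\pm}=\pm v^{\pm}$ (where $e_{ij}=e_ie_j$). Let $\mathcal M_k(\mathbb R^3,S)$ be the space of $S$-valued polynomials $P$ on $\mathbb R^3$, homogeneous of degree $k$, with $\partial P=0$, where $\partial=e_1\frac{\partial}{\partial x_1}+e_2\frac{\partial}{\partial x_2}+e_3\frac{\partial}{\partial x_3}$. Consider on it the operators $$\tilde H=-i\Big(\frac{e_{12}}{2}+x_2\frac{\partial}{\partial x_1}-x_1\frac{\partial}{\partial x_2}\Big),\quad \tilde X^{\pm}=X^{\pm}+\omega^{\pm},$$ where $X^{+}=-2x_3\frac{\partial}{\partial z}+\overline z\frac{\partial}{\partial x_3}$, $X^{-}=2x_3\frac{\partial}{\partial\overline z}- z\frac{\partial}{\partial x_3}$, $z=x_1+ix_2$, $\frac{\partial}{\partial z}=\frac12(\partial_{x_1}-i\partial_{x_2})$, $\frac{\partial}{\partial \overline z}=\frac12(\partial_{x_1}+i\partial_{x_2})$, and $\omega^+=\frac12(e_{31}+ie_{23})$, $\omega^-=\frac12(-e_{31}+ie_{23})$ act by left multiplication. Then the (irreducible) $\mathfrak{sl}(2,\mathbb C)$-module $\mathcal M_k(\mathbb R^3,S)$ has a basis consisting of the polynomials $$F^k_0=\frac{1}{k!\,2^k}\,\overline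 z^k v^+\quad\text{and}\quad F^k_j=(\tilde X^-)^jF^k_0,\ \ 0<j\le 2k+1.$$ In addition, for each $j=0,\dots,2k+1$, $F^k_j$ is a weight vector with weight $k+\frac12-j$, i.e. $\tilde H F^k_j=(k+\frac12-j)F^k_j$.
   Context: The operators $\tilde H,\tilde X^+,\tilde X^-$ satisfy $[\tilde X^+,\tilde X^-]=2\tilde H$ and $[\tilde H,\tilde X^\pm]=\pm\tilde X^\pm$; they are the complexified infinitesimal action $L_{ij}=\frac{e_{ij}}2+x_j\partial_{x_i}-x_i\partial_{x_j}$ of $\mathfrak{so}(3)$ on $S$-valued polynomials, via $\tilde H=-iL_{12}$, $\tilde X^+=L_{31}+iL_{23}$, $\tilde X^-=-L_{31}+iL_{23}$. *)

From mathcomp Require Import all_boot all_order all_algebra all_field.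
From mathcomp Require Import mpoly.
Set Implicit Arguments. Unset Strict Implicit. Unset Printing Implicit Defensive.
Import GRing.Theory Num.Theory.
Local Open Scope ring_scope.

Notation Pol := {mpoly algC[3]}.
(* S-valued polynomials, S = C^2 (column vectors) *)
Notation SPol := 'cV[Pol]_2.

Definition i1 : 'I_3 := @Ordinal 3 0 isT.
Definition i2 : 'I_3 := @Ordinal 3 1 isT.
Definition i3 : 'I_3 := @Ordinal 3 2 isT.

Definition clifford_rel (E : 'I_3 -> 'M[algC]_2) : Prop :=
  forall j l : 'I_3, E j *m E l + E l *m E j = (-2 * (j == l)%:R) *: 1%:M.

Definition cst (A : 'M[algC]_2) : 'M[Pol]_2 := map_mx (fun c => c%:MP) A.
Definition actC (A : 'M[algC]_2) (P : SPol) : SPol := cst A *m P.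
Definition scS (c : algC) (P : SPol) : SPol := c%:MP *: P.
Definition sv (v : 'cV[algC]_2) : SPol := map_mx (fun c => c%:MP) v.

Definition dx (i : 'I_3) (P : SPol) : SPol := map_mx (mderiv i) P.
Definition mx (p : Pol) (P : SPol) : SPol := p *: P.

Definition x1 : Pol := 'X_i1.
Definition x2 : Pol := 'X_i2.
Definition x3 : Pol := 'X_i3.
Definition zz : Pol := x1 + 'i%:MP * x2.
Definition zbar : Pol := x1 - 'i%:MP * x2.

Definition dirac (E : 'I_3 -> 'M[algC]_2) (P : SPol) : SPol :=
  actC (E i1) (dx i1 P) + actC (E i2) (dx i2 P) + actC (E i3) (dx i3 P).

Definition Mk (E : 'I_3 -> 'M[algC]_2) (k : nat) (P : SPol) : Prop :=
  (forall r c, P r c \is k.-homog) /\ dirac E P = 0.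

Definition e2 (E : 'I_3 -> 'M[algC]_2) (a b : 'I_3) := E a *m E b.

Definition Ht (E : 'I_3 -> 'M[algC]_2) (P : SPol) : SPol :=
  scS (- 'i) (actC (2^-1 *: e2 E i1 i2) P + mx x2 (dx i1 P) - mx x1 (dx i2 P)).

Definition dzbar (P : SPol) : SPol := scS (2^-1) (dx i1 P + scS 'i (dx i2 P)).

Definition Xm (P : SPol) : SPol := mx (2%:R * x3) (dzbar P) - mx zz (dx i3 P).
Definition omegam (E : 'I_3 -> 'M[algC]_2) : 'M[algC]_2 :=
  2^-1 *: (- e2 E i3 i1 + 'i *: e2 E i2 i3).
Definition Xtm (E : 'I_3 -> 'M[algC]_2) (P : SPol) : SPol := Xm P + actC (omegam E) P.

Definition F (E : 'I_3 -> 'M[algC]_2) (vp : 'cV[algC]_2) (k j : nat) : SPol :=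
  iter j (Xtm E) (scS ((k`!)%:R * 2 ^+ k)^-1 (mx (zbar ^+ k) (sv vp))).

Definition is_basis_of (M : SPol -> Prop) (n : nat) (f : nat -> SPol) : Prop :=
  (forall j, (j < n)%N -> M (f j)) /\
  (forall c : 'I_n -> algC, \sum_(j < n) scS (c j) (f j) = 0 -> forall j, c j = 0) /\
  (forall P, M P -> exists c : 'I_n -> algC, P = \sum_(j < n) scS (c j) (f j)).

From mathcomp Require Import all_boot all_order all_algebra all_field.
From mathcomp Require Import mpoly.
From mathcomp Require Import ring zify.
Import GRing.Theory Num.Theory.
Local Open Scope ring_scope.

(* H~, X~^- and X~^+ := X^+ + omega^+ all have the shape A (x) 1 + 1 (x) D, with A a constant
   matrix and D a first-order scalar differential operator, so each commutator of two of them
   splits into a matrix commutator computed in the Clifford algebra and a commutator of scalar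
   differential operators.  This gives the sl(2) relations [H~, X~^-] = -X~^- and
   [X~^+, X~^-] = 2 H~, and shows that X~^- commutes with the Dirac operator.  F_0 is monogenic
   of weight k + 1/2 and killed by X~^+, so the F_j are monogenic of weight k + 1/2 - j, and
   X~^+ F_(j+1) = (j+1)(2k+1-j) F_j keeps F_0, ..., F_(2k+1) nonzero; having distinct weights
   they are independent.  They span because a monogenic polynomial of degree k is determined by
   its 2k+2 coefficients at monomials free of x3. *)

Definition iP : Pol := 'i%:MP.

Lemma mulPii : iP * iP = -1.
Proof. by rewrite /iP -mpolyCM mulCii mpolyCN. Qed.

Lemma mderiv_var (i j : 'I_3) : mderiv i ('X_j : Pol) = (j == i)%:R.
Proof.
rewrite mderivX mnm1E; case: eqP => [->|_]; last by rewrite scale0r.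
have -> : (U_(i) - U_(i) = 0)%MM by apply/mnmP => l; rewrite !mnmE subnn.
by rewrite mpolyX0 scale1r.
Qed.

Lemma mderiv_iP i : mderiv i iP = 0. Proof. exact: mderivC. Qed.

Lemma mderiv_nat i n : mderiv i (n%:R : Pol) = 0.
Proof. by rewrite -mpolyC_nat mderivC. Qed.

Ltac mderiv_simpl :=
  rewrite /x1 /x2 /x3 -?/iP;
  repeat progress rewrite ?mderivD ?mderivB ?mderivN ?mderivM ?mderiv_iP ?mderiv_nat ?mderiv_var /=;
  rewrite ?(mderiv_comm i1 i2) ?(mderiv_comm i1 i3) ?(mderiv_comm i2 i3).

(* The scalar parts of X~^-, X~^+ and H~: in real coordinates X^- = 2 x3 d/dzbar - z d/dx3,
   X^+ = -2 x3 d/dz + zbar d/dx3 and -i (x2 d/dx1 - x1 d/dx2). *)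
Definition Xm_pol (p : Pol) : Pol :=
  x3 * (mderiv i1 p + iP * mderiv i2 p) - zz * mderiv i3 p.
Definition Xp_pol (p : Pol) : Pol :=
  zbar * mderiv i3 p - x3 * (mderiv i1 p - iP * mderiv i2 p).
Definition H_pol (p : Pol) : Pol := - iP * (x2 * mderiv i1 p - x1 * mderiv i2 p).

Lemma H_Xm_pol p : H_pol (Xm_pol p) - Xm_pol (H_pol p) = - Xm_pol p.
Proof. rewrite /H_pol /Xm_pol /zz; mderiv_simpl; ring: mulPii. Qed.

Lemma Xp_Xm_pol p : Xp_pol (Xm_pol p) - Xm_pol (Xp_pol p) = 2%:R * H_pol p.
Proof. rewrite /H_pol /Xm_pol /Xp_pol /zz /zbar; mderiv_simpl; ring: mulPii. Qed.

Lemma mderiv1_Xm_pol p : mderiv i1 (Xm_pol p) - Xm_pol (mderiv i1 p) = - mderiv i3 p.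
Proof. rewrite /Xm_pol /zz; mderiv_simpl; ring. Qed.

Lemma mderiv2_Xm_pol p :
  mderiv i2 (Xm_pol p) - Xm_pol (mderiv i2 p) = - (iP * mderiv i3 p).
Proof. rewrite /Xm_pol /zz; mderiv_simpl; ring. Qed.

Lemma mderiv3_Xm_pol p :
  mderiv i3 (Xm_pol p) - Xm_pol (mderiv i3 p) = mderiv i1 p + iP * mderiv i2 p.
Proof. rewrite /Xm_pol /zz; mderiv_simpl; ring. Qed.

Lemma mderiv_exp i (p : Pol) n : mderiv i (p ^+ n) = n%:R * p ^+ n.-1 * mderiv i p.
Proof.
elim: n => [|n IH]; first by rewrite expr0 -mpolyC1 mderivC !mul0r.
rewrite exprS mderivM IH; case: n {IH} => [|n] /=; first by rewrite expr0 !mul0r; ring.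
by rewrite exprS mulrS; ring.
Qed.

Lemma mderiv1_zbar : mderiv i1 zbar = 1. Proof. by rewrite /zbar; mderiv_simpl; ring. Qed.
Lemma mderiv2_zbar : mderiv i2 zbar = - iP. Proof. by rewrite /zbar; mderiv_simpl; ring. Qed.
Lemma mderiv3_zbar : mderiv i3 zbar = 0. Proof. by rewrite /zbar; mderiv_simpl; ring. Qed.

Lemma H_pol_zbar_exp n : H_pol (zbar ^+ n) = n%:R * zbar ^+ n.
Proof.
rewrite /H_pol !mderiv_exp mderiv1_zbar mderiv2_zbar; case: n => [|n] /=; first by ring.
by rewrite exprSr /zbar; ring: mulPii.
Qed.

Lemma Xp_pol_zbar_exp n : Xp_pol (zbar ^+ n) = 0.
Proof. by rewrite /Xp_pol !mderiv_exp mderiv1_zbar mderiv2_zbar mderiv3_zbar; ring: mulPii. Qed.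

Lemma zbar_neq0 : zbar != 0.
Proof. by apply: contra_eqN mderiv1_zbar => /eqP ->; rewrite mderiv0 eq_sym oner_eq0. Qed.

Definition clinear (f : Pol -> Pol) : Prop :=
  forall (a : algC) (p q : Pol), f (a%:MP * p + q) = a%:MP * f p + f q.

Section CLinear.
Context {f : Pol -> Pol} (f_lin : clinear f).

Lemma clinear0 : f 0 = 0.
Proof.
by have := f_lin (-1) 0 0; rewrite mulr0 addr0 mpolyCN mpolyC1 mulN1r addNr.
Qed.

Lemma clinearD p q : f (p + q) = f p + f q.
Proof. by have := f_lin 1 p q; rewrite mpolyC1 !mul1r. Qed.

Lemma clinearZ a p : f (a%:MP * p) = a%:MP * f p.
Proof. by have := f_lin a p 0; rewrite !addr0 clinear0 addr0. Qed.

End CLinear.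

Lemma clinear_mderiv i : clinear (mderiv i).
Proof. by move=> a p q; rewrite mderivD mderiv_mulC. Qed.

Lemma clinear_Xm_pol : clinear Xm_pol.
Proof. by move=> a p q; rewrite /Xm_pol !mderivD !mderiv_mulC; ring. Qed.

Lemma clinear_Xp_pol : clinear Xp_pol.
Proof. by move=> a p q; rewrite /Xp_pol !mderivD !mderiv_mulC; ring. Qed.

Lemma clinear_H_pol : clinear H_pol.
Proof. by move=> a p q; rewrite /H_pol !mderivD !mderiv_mulC; ring. Qed.

Lemma sum_ord2 (V : nmodType) (G : 'I_2 -> V) : \sum_(s < 2) G s = G 0 + G 1.
Proof. by rewrite !big_ord_recl big_ord0 addr0; congr (G _ + G _); apply/val_inj. Qed.

Ltac entrywise :=
  apply/matrixP => ? ?;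
  rewrite ?(mxE, sum_ord2, mpolyCD, mpolyCB, mpolyCM, mpolyCN, mpolyC0, mpolyC1).

Lemma scSA a b (P : SPol) : scS a (scS b P) = scS (a * b) P.
Proof. by rewrite /scS scalerA mpolyCM. Qed.

Lemma scSDl a b (P : SPol) : scS a P + scS b P = scS (a + b) P.
Proof. by rewrite /scS -scalerDl mpolyCD. Qed.

Lemma scS0 (P : SPol) : scS 0 P = 0.
Proof. by rewrite /scS mpolyC0 scale0r. Qed.

Lemma scS_eq0 a (P : SPol) : a != 0 -> scS a P = 0 -> P = 0.
Proof.
move=> a_neq0 /matrixP aP0; apply/matrixP => r c; have /eqP := aP0 r c.
by rewrite !mxE mulf_eq0 mpolyC_eq0 (negbTE a_neq0) => /eqP.
Qed.

Lemma scSDr a (P Q : SPol) : scS a (P + Q) = scS a P + scS a Q.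
Proof. exact: scalerDr. Qed.

Lemma scS0r a : scS a (0 : SPol) = 0.
Proof. exact: scaler0. Qed.

Lemma actC_mul A B (P : SPol) : actC A (actC B P) = actC (A *m B) P.
Proof. by rewrite /actC /cst mulmxA map_mxM. Qed.

Lemma actCBl A B (P : SPol) : actC (A - B) P = actC A P - actC B P.
Proof. by rewrite /actC /cst map_mxB mulmxBl. Qed.

Lemma actCDr A (P Q : SPol) : actC A (P + Q) = actC A P + actC A Q.
Proof. by rewrite /actC mulmxDr. Qed.

Lemma actCZr a A (P : SPol) : actC A (scS a P) = scS a (actC A P).
Proof. by rewrite /actC /scS scalemxAr. Qed.

Lemma map_mx_actC {f} (f_lin : clinear f) A (P : SPol) :
  map_mx f (actC A P) = actC A (map_mx f P).
Proof. by entrywise; rewrite f_lin (clinearZ f_lin). Qed.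

Lemma map_mx_clinearD {f} (f_lin : clinear f) (P Q : SPol) :
  map_mx f (P + Q) = map_mx f P + map_mx f Q.
Proof. by entrywise; rewrite (clinearD f_lin). Qed.

Definition tensor_op (A : 'M[algC]_2) (f : Pol -> Pol) (P : SPol) : SPol :=
  actC A P + map_mx f P.

Lemma tensor_op_commutator {f g} (f_lin : clinear f) (g_lin : clinear g) A B (P : SPol) :
  tensor_op A f (tensor_op B g P) - tensor_op B g (tensor_op A f P) =
  tensor_op (A *m B - B *m A) (fun p => f (g p) - g (f p)) P.
Proof.
rewrite /tensor_op !actCDr !(map_mx_clinearD f_lin) !(map_mx_clinearD g_lin).
by rewrite !(map_mx_actC f_lin) !(map_mx_actC g_lin) !actC_mul actCBl; entrywise; ring.
Qed.

Lemma dirac_tensor_op {f} (f_lin : clinear f) E A (P : SPol) :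
  dirac E (tensor_op A f P) - tensor_op A f (dirac E P) =
    actC (E i1 *m A - A *m E i1) (dx i1 P) + actC (E i2 *m A - A *m E i2) (dx i2 P)
  + actC (E i3 *m A - A *m E i3) (dx i3 P)
  + actC (E i1) (map_mx (fun p => mderiv i1 (f p) - f (mderiv i1 p)) P)
  + actC (E i2) (map_mx (fun p => mderiv i2 (f p) - f (mderiv i2 p)) P)
  + actC (E i3) (map_mx (fun p => mderiv i3 (f p) - f (mderiv i3 p)) P).
Proof.
rewrite /dirac /tensor_op /dx.
rewrite !(map_mx_clinearD (clinear_mderiv _)) !(map_mx_actC (clinear_mderiv _)).
rewrite !actCDr !(map_mx_clinearD f_lin) !(map_mx_actC f_lin) !actC_mul.
by entrywise; ring.
Qed.

Lemma diracZ E a (P : SPol) : dirac E (scS a P) = scS a (dirac E P).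
Proof. by rewrite /dirac /dx; entrywise; rewrite !mderiv_mulC; ring. Qed.

Lemma diracD E (P Q : SPol) : dirac E (P + Q) = dirac E P + dirac E Q.
Proof. by rewrite /dirac /dx; entrywise; rewrite !mderivD; ring. Qed.

Lemma dirac_mx_sv E p (v : 'cV[algC]_2) : dirac E (mx p (sv v)) =
  mx (mderiv i1 p) (sv (E i1 *m v)) + mx (mderiv i2 p) (sv (E i2 *m v))
  + mx (mderiv i3 p) (sv (E i3 *m v)).
Proof. by rewrite /dirac /dx; entrywise; rewrite !mderivM !mderivC; ring. Qed.

Section TensorOpLinear.
Context {A : 'M[algC]_2} {f : Pol -> Pol} (f_lin : clinear f).

Lemma tensor_opD (P Q : SPol) : tensor_op A f (P + Q) = tensor_op A f P + tensor_op A f Q.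
Proof. by rewrite /tensor_op actCDr (map_mx_clinearD f_lin); entrywise; ring. Qed.

Lemma tensor_opZ a (P : SPol) : tensor_op A f (scS a P) = scS a (tensor_op A f P).
Proof. by rewrite /tensor_op actCZr; entrywise; rewrite (clinearZ f_lin); ring. Qed.

Lemma tensor_op0 : tensor_op A f 0 = 0.
Proof. by entrywise; rewrite (clinear0 f_lin); ring. Qed.

Lemma tensor_op_sv p (v : 'cV[algC]_2) :
  tensor_op A f (mx p (sv v)) = mx p (sv (A *m v)) + mx (f p) (sv v).
Proof. by entrywise; rewrite [X in f X]mulrC (clinearZ f_lin); ring. Qed.

End TensorOpLinear.

Section Clifford.
Context {E : 'I_3 -> 'M[algC]_2} (E_cl : clifford_rel E).

Lemma clifford_sqr j : E j *m E j = - 1%:M.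
Proof.
have := E_cl j j; rewrite eqxx mulr1 => E_jj.
have : 2%:R *: (E j *m E j) = 2%:R *: (- 1%:M : 'M[algC]_2).
  by rewrite scaler_nat mulr2n E_jj scalerN scaleNr.
by move/(congr1 (fun X => 2^-1 *: X)); rewrite !scalerA mulVf ?pnatr_eq0 // !scale1r.
Qed.

Lemma clifford_anti j l : j != l -> E j *m E l = - (E l *m E j).
Proof.
move=> jl; have := E_cl j l; rewrite (negbTE jl) mulr0 scale0r => /eqP.
by rewrite addr_eq0 => /eqP.
Qed.

Lemma clifford_sqrA j (X : 'M[algC]_2) : E j *m (E j *m X) = - X.
Proof. by rewrite mulmxA clifford_sqr mulNmx mul1mx. Qed.

Lemma clifford_antiA j l (X : 'M[algC]_2) : j != l ->
  E j *m (E l *m X) = - (E l *m (E j *m X)).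
Proof. by move=> jl; rewrite !mulmxA (clifford_anti _ _ jl) mulNmx. Qed.

End Clifford.

Ltac clifford_normalize E_cl :=
  rewrite /e2; repeat progress rewrite ?mulmxDl ?mulmxDr ?mulmxBl ?mulmxBr ?mulNmx ?mulmxN
  -?scalemxAl -?scalemxAr -?mulmxA
  ?(clifford_antiA E_cl i2 i1 _ isT) ?(clifford_antiA E_cl i3 i1 _ isT)
  ?(clifford_antiA E_cl i3 i2 _ isT) ?(clifford_anti E_cl i2 i1 isT)
  ?(clifford_anti E_cl i3 i1 isT) ?(clifford_anti E_cl i3 i2 isT)
  ?(clifford_sqrA E_cl) ?(clifford_sqr E_cl) ?opprK ?mulmx1 ?mul1mx.

Ltac entrywise_field := apply/matrixP => ? ?; rewrite !mxE ?sum_ord2 ?mxE; by field: (@mulCii algC).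

Definition Hspin E : 'M[algC]_2 := (- 'i) *: (2^-1 *: e2 E i1 i2).
Definition omegap E : 'M[algC]_2 := 2^-1 *: (e2 E i3 i1 + 'i *: e2 E i2 i3).

Section CliffordIdentities.
Context {E : 'I_3 -> 'M[algC]_2} (E_cl : clifford_rel E).

Lemma Hspin_omegam : Hspin E *m omegam E - omegam E *m Hspin E = - omegam E.
Proof. rewrite /Hspin /omegam; clifford_normalize E_cl; entrywise_field. Qed.

Lemma omegap_omegam : omegap E *m omegam E - omegam E *m omegap E = 2%:R *: Hspin E.
Proof. rewrite /Hspin /omegam /omegap; clifford_normalize E_cl; entrywise_field. Qed.

Lemma e1_omegam : E i1 *m omegam E - omegam E *m E i1 = - E i3.
Proof. rewrite /omegam; clifford_normalize E_cl; entrywise_field. Qed.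

Lemma e2_omegam : E i2 *m omegam E - omegam E *m E i2 = - ('i *: E i3).
Proof. rewrite /omegam; clifford_normalize E_cl; entrywise_field. Qed.

Lemma e3_omegam : E i3 *m omegam E - omegam E *m E i3 = E i1 + 'i *: E i2.
Proof. rewrite /omegam; clifford_normalize E_cl; entrywise_field. Qed.

Context {vp : 'cV[algC]_2} (vp_weight : (- 'i) *: (e2 E i1 i2 *m vp) = vp).

Lemma e1_vp : E i1 *m vp = 'i *: (E i2 *m vp).
Proof.
rewrite -{1}vp_weight /e2 -scalemxAr !mulmxA (clifford_sqr E_cl) !mulNmx mul1mx.
by rewrite scalerN scaleNr opprK.
Qed.

Lemma omegap_vp : omegap E *m vp = 0.
Proof.
rewrite /omegap -scalemxAl mulmxDl -scalemxAl /e2 -!mulmxA e1_vp -scalemxAr.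
by rewrite !mulmxA (clifford_anti E_cl i3 i2 isT) mulNmx -mulmxA scalerN addNr scaler0.
Qed.

Lemma Hspin_vp : Hspin E *m vp = 2^-1 *: vp.
Proof. by rewrite /Hspin -!scalemxAl scalerA mulrC -scalerA vp_weight. Qed.

End CliffordIdentities.

Definition Xtp E (P : SPol) : SPol := tensor_op (omegap E) Xp_pol P.

Lemma Xtm_tensor E (P : SPol) : Xtm E P = tensor_op (omegam E) Xm_pol P.
Proof.
rewrite /Xtm /tensor_op /Xm /dzbar addrC; congr (_ + _); entrywise.
have half2 : 2%:R * (2^-1 : algC)%:MP = 1 :> Pol.
  by rewrite -mpolyC_nat -mpolyCM mulfV ?pnatr_eq0 // mpolyC1.
rewrite /Xm_pol -/iP; ring: half2.
Qed.

Lemma Ht_tensor E (P : SPol) : Ht E P = tensor_op (Hspin E) H_pol P.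
Proof. by rewrite /Ht /tensor_op /Hspin; entrywise; rewrite /H_pol -/iP; ring. Qed.

Section Sl2Relations.
Context {E : 'I_3 -> 'M[algC]_2} (E_cl : clifford_rel E).

Lemma Ht_Xtm (P : SPol) : Ht E (Xtm E P) - Xtm E (Ht E P) = - Xtm E P.
Proof.
rewrite !Ht_tensor !Xtm_tensor (tensor_op_commutator clinear_H_pol clinear_Xm_pol).
by rewrite (Hspin_omegam E_cl) /tensor_op (eq_map_mx _ H_Xm_pol); entrywise; ring.
Qed.

Lemma Xtp_Xtm (P : SPol) : Xtp E (Xtm E P) - Xtm E (Xtp E P) = scS 2%:R (Ht E P).
Proof.
rewrite /Xtp Ht_tensor !Xtm_tensor (tensor_op_commutator clinear_Xp_pol clinear_Xm_pol).
by rewrite (omegap_omegam E_cl) /tensor_op (eq_map_mx _ Xp_Xm_pol); entrywise; ring.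
Qed.

Lemma dirac_Xtm (P : SPol) : dirac E (Xtm E P) = Xtm E (dirac E P).
Proof.
apply/eqP; rewrite -subr_eq0 !Xtm_tensor (dirac_tensor_op clinear_Xm_pol).
rewrite (e1_omegam E_cl) (e2_omegam E_cl) (e3_omegam E_cl).
rewrite (eq_map_mx _ mderiv1_Xm_pol) (eq_map_mx _ mderiv2_Xm_pol) (eq_map_mx _ mderiv3_Xm_pol).
by apply/eqP; rewrite /dx /iP; entrywise; ring.
Qed.

End Sl2Relations.

Lemma XtmZ E a (P : SPol) : Xtm E (scS a P) = scS a (Xtm E P).
Proof. by rewrite !Xtm_tensor (tensor_opZ clinear_Xm_pol). Qed.

Lemma Xtm0 E : Xtm E 0 = 0.
Proof. by rewrite Xtm_tensor (tensor_op0 clinear_Xm_pol). Qed.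

Lemma HtD E (P Q : SPol) : Ht E (P + Q) = Ht E P + Ht E Q.
Proof. by rewrite !Ht_tensor (tensor_opD clinear_H_pol). Qed.

Lemma HtZ E a (P : SPol) : Ht E (scS a P) = scS a (Ht E P).
Proof. by rewrite !Ht_tensor (tensor_opZ clinear_H_pol). Qed.

Lemma Xtp0 E : Xtp E 0 = 0.
Proof. by rewrite /Xtp (tensor_op0 clinear_Xp_pol). Qed.

Lemma F_succ E vp k j : F E vp k j.+1 = Xtm E (F E vp k j).
Proof. by rewrite /F iterS. Qed.

Section HighestWeight.
Context {E : 'I_3 -> 'M[algC]_2} (E_cl : clifford_rel E).
Context {vp : 'cV[algC]_2} (vp_weight : (- 'i) *: (e2 E i1 i2 *m vp) = vp) (k : nat).

Lemma Ht_F0 : Ht E (F E vp k 0) = scS (k%:R + 2^-1) (F E vp k 0).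
Proof.
rewrite /F /= Ht_tensor (tensor_opZ clinear_H_pol).
rewrite (tensor_op_sv clinear_H_pol) (Hspin_vp vp_weight) H_pol_zbar_exp.
by entrywise; ring.
Qed.

Lemma Xtp_F0 : Xtp E (F E vp k 0) = 0.
Proof.
rewrite /F /= /Xtp (tensor_opZ clinear_Xp_pol).
rewrite (tensor_op_sv clinear_Xp_pol) (omegap_vp E_cl vp_weight) Xp_pol_zbar_exp.
by entrywise; ring.
Qed.

Lemma dirac_F0 : dirac E (F E vp k 0) = 0.
Proof.
rewrite /F /= diracZ dirac_mx_sv !mderiv_exp mderiv1_zbar mderiv2_zbar mderiv3_zbar.
by rewrite (e1_vp E_cl vp_weight); entrywise; rewrite -/iP; ring: mulPii.
Qed.

Lemma Ht_F j : Ht E (F E vp k j) = scS (k%:R + 2^-1 - j%:R) (F E vp k j).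
Proof.
elim: j => [|j IH]; first by rewrite Ht_F0 subr0.
rewrite F_succ -[LHS](subrK (Xtm E (Ht E (F E vp k j)))) (Ht_Xtm E_cl) IH XtmZ.
by entrywise; rewrite -natr1; ring.
Qed.

Definition Xtp_coef j : algC := j.+1%:R * (2%:R * k%:R + 1 - j%:R).

Lemma Xtp_F j : Xtp E (F E vp k j.+1) = scS (Xtp_coef j) (F E vp k j).
Proof.
have Xtp_XtmE P : Xtp E (Xtm E P) = Xtm E (Xtp E P) + scS 2%:R (Ht E P).
  by rewrite -(Xtp_Xtm E_cl) addrC subrK.
elim: j => [|j IH]; rewrite F_succ Xtp_XtmE.
  by rewrite Xtp_F0 Xtm0 add0r Ht_F0 scSA /Xtp_coef; congr scS; field.
rewrite IH XtmZ -F_succ Ht_F scSA scSDl /Xtp_coef; congr scS.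
by rewrite -!natr1; field.
Qed.

End HighestWeight.

Section Nonvanishing.
Context {E : 'I_3 -> 'M[algC]_2} (E_cl : clifford_rel E).
Context {vp : 'cV[algC]_2} (vp_weight : (- 'i) *: (e2 E i1 i2 *m vp) = vp)
  (vp_neq0 : vp != 0) (k : nat).

Lemma F0_neq0 : F E vp k 0 != 0.
Proof.
have /matrix0Pn[r [c vp_rc]] := vp_neq0.
apply/matrix0Pn; exists r, c; rewrite !mxE !mulf_neq0 ?mpolyC_eq0 ?expf_neq0 ?zbar_neq0 //.
by rewrite invr_eq0 mulf_neq0 ?expf_neq0 ?pnatr_eq0 // gtn_eqF ?fact_gt0.
Qed.

Lemma Xtp_coef_neq0 j : (j <= 2 * k)%N -> Xtp_coef k j != 0.
Proof.
move=> j_le; rewrite /Xtp_coef mulf_neq0 ?pnatr_eq0 //.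
have -> : 2%:R * k%:R + 1 - j%:R = (2 * k + 1 - j)%N%:R :> algC.
  by rewrite natrB ?natrD ?natrM; [ring | lia].
by rewrite pnatr_eq0; lia.
Qed.

Lemma F_neq0 j : (j <= 2 * k + 1)%N -> F E vp k j != 0.
Proof.
elim: j => [|j IH] j_le; first exact: F0_neq0.
apply: contra_neq (IH (ltnW j_le)) => Fj0.
have := Xtp_F E_cl vp_weight k j; rewrite Fj0 Xtp0 => /esym.
by apply: scS_eq0; apply: Xtp_coef_neq0; lia.
Qed.

End Nonvanishing.

Section DistinctEigenvalues.
Context {T : SPol -> SPol} {f : nat -> SPol} {lam : nat -> algC} {n : nat}.
Hypotheses (TD : {morph T : P Q / P + Q}) (TZ : forall a P, T (scS a P) = scS a (T P))
  (T_f : forall j, T (f j) = scS (lam j) (f j)) (lam_inj : injective lam)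
  (f_neq0 : forall j, (j < n)%N -> f j != 0).

Lemma eigenvectors_free m : (m <= n)%N -> forall c : 'I_m -> algC,
  \sum_(j < m) scS (c j) (f j) = 0 -> forall j, c j = 0.
Proof.
have T0 : T 0 = 0 by have := TZ 0 0; rewrite !scS0.
elim: m => [|m IH] m_le c sum0; first by case.
have sum_shift : \sum_(j < m.+1) scS (c j * (lam j - lam m)) (f j) = 0.
  transitivity (T (\sum_(j < m.+1) scS (c j) (f j))
                - scS (lam m) (\sum_(j < m.+1) scS (c j) (f j))); last first.
    by rewrite sum0 T0 scS0r subr0.
  rewrite (big_morph T TD T0) (big_morph (scS _) (scSDr _) (scS0r _)) -sumrB.
  by apply: eq_bigr => j _; rewrite TZ T_f; entrywise; ring.
rewrite big_ord_recr /= subrr mulr0 scS0 addr0 in sum_shift.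
have c_low (j : 'I_m) : c (widen_ord (leqnSn m) j) = 0.
  have /eqP := IH (ltnW m_le) _ sum_shift j.
  rewrite mulf_eq0 subr_eq0 => /orP[/eqP //|/eqP/lam_inj /= jm].
  by move: (ltn_ord j); rewrite jm ltnn.
rewrite big_ord_recr /= big1 ?add0r in sum0; last by move=> j _; rewrite c_low scS0.
have c_top : c ord_max = 0.
  have [//|c_neq0] := eqVneq (c ord_max) 0.
  by move: (f_neq0 _ m_le); rewrite (scS_eq0 _ _ c_neq0 sum0) eqxx.
move=> j; have [jm|jm] := ltnP j m.
  by have -> : j = widen_ord (leqnSn m) (Ordinal jm) by apply/val_inj.
by have -> : j = ord_max by apply/val_inj => /=; move: (ltn_ord j); lia.
Qed.

End DistinctEigenvalues.

Lemma dhomog_coef d (p : Pol) : (forall m, mdeg m != d -> p@_m = 0) -> p \is d.-homog.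
Proof.
move=> coef0; apply/dhomogP => m; rewrite mcoeff_msupp => p_m; apply/eqP.
by apply: contraNT p_m => /coef0 ->.
Qed.

Lemma mderiv_dhomog d i (p : Pol) : p \is d.+1.-homog -> mderiv i p \is d.-homog.
Proof.
move=> p_hom; apply: dhomog_coef => m m_deg; rewrite mcoeff_deriv.
by rewrite (dhomog_nemf_coeff p_hom) ?mul0rn //= mdegD mdeg1 addn1 eqSS.
Qed.

Lemma mderiv_dhomog0 i (p : Pol) : p \is 0.-homog -> mderiv i p = 0.
Proof.
move=> p_hom; apply/mpolyP => m; rewrite mcoeff_deriv mcoeff0.
by rewrite (dhomog_nemf_coeff p_hom) ?mul0rn //= mdegD mdeg1 addn1.
Qed.

Lemma mulC_dhomog d c (p : Pol) : p \is d.-homog -> c%:MP * p \is d.-homog.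
Proof. by rewrite mul_mpolyC; apply: dhomogZ. Qed.

Lemma var_dhomog (i : 'I_3) : ('X_i : Pol) \is 1.-homog.
Proof. by rewrite dhomogX /= mdeg1. Qed.

Lemma zz_dhomog : zz \is 1.-homog.
Proof. by apply: rpredD; [exact: var_dhomog | apply: mulC_dhomog; exact: var_dhomog]. Qed.

Lemma zbar_dhomog : zbar \is 1.-homog.
Proof. by apply: rpredB; [exact: var_dhomog | apply: mulC_dhomog; exact: var_dhomog]. Qed.

Lemma Xm_pol_dhomog d (p : Pol) : p \is d.-homog -> Xm_pol p \is d.-homog.
Proof.
case: d => [|d] p_hom.
  by rewrite /Xm_pol !mderiv_dhomog0 // !(mulr0, addr0, subr0) rpred0.
apply: rpredB; last by apply: (dhomogM (d := 1)); [exact: zz_dhomog | exact: mderiv_dhomog].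
apply: (dhomogM (d := 1)); first exact: var_dhomog.
by apply: rpredD; [exact: mderiv_dhomog | apply: mulC_dhomog; exact: mderiv_dhomog].
Qed.

Section Monogenic.
Context {E : 'I_3 -> 'M[algC]_2} (k : nat).

Lemma Mk0 : Mk E k 0.
Proof.
split; first by move=> r c; rewrite mxE rpred0.
by rewrite /dirac /dx; entrywise; rewrite mderiv0; ring.
Qed.

Lemma MkD {P Q} : Mk E k P -> Mk E k Q -> Mk E k (P + Q).
Proof.
move=> [P_hom P_dirac] [Q_hom Q_dirac]; split; first by move=> r c; rewrite mxE rpredD.
by rewrite diracD P_dirac Q_dirac addr0.
Qed.

Lemma MkZ a {P} : Mk E k P -> Mk E k (scS a P).
Proof.
move=> [P_hom P_dirac]; split; first by move=> r c; rewrite mxE mulC_dhomog.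
by rewrite diracZ P_dirac scS0r.
Qed.

Lemma MkB {P Q} : Mk E k P -> Mk E k Q -> Mk E k (P - Q).
Proof.
move=> P_Mk /(MkZ (-1))/(MkD P_Mk).
by rewrite /scS mpolyCN mpolyC1 scaleN1r.
Qed.

Lemma Mk_sum n (c : 'I_n -> algC) (G : 'I_n -> SPol) :
  (forall j, Mk E k (G j)) -> Mk E k (\sum_(j < n) scS (c j) (G j)).
Proof. by move=> G_Mk; apply: big_ind => [|P Q|j _]; [exact: Mk0 | exact: MkD | exact/MkZ/G_Mk]. Qed.

Lemma Xtm_Mk (E_cl : clifford_rel E) P : Mk E k P -> Mk E k (Xtm E P).
Proof.
move=> [P_hom P_dirac]; split; last by rewrite (dirac_Xtm E_cl) P_dirac Xtm0.
move=> r c; rewrite Xtm_tensor /tensor_op mxE; apply: rpredD.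
  by rewrite /actC mxE; apply: rpred_sum => j _; rewrite mxE; exact/mulC_dhomog/P_hom.
by rewrite mxE; exact/Xm_pol_dhomog/P_hom.
Qed.

End Monogenic.

Lemma F_Mk {E} (E_cl : clifford_rel E) {vp} (vp_weight : (- 'i) *: (e2 E i1 i2 *m vp) = vp)
  k j : Mk E k (F E vp k j).
Proof.
elim: j => [|j IH]; last by rewrite F_succ; exact: Xtm_Mk.
split; last exact: dirac_F0.
move=> r c; rewrite /F /= !mxE mulC_dhomog // mulrC mulC_dhomog //.
by have := dhomogMn k zbar_dhomog; rewrite mul1n.
Qed.

Definition coefv (P : SPol) (m : 'X_{1..3}) : 'cV[algC]_2 := \col_r (P r 0)@_m.

Lemma coefv_dirac E P m : coefv (dirac E P) m =
    (m i1).+1%:R *: (E i1 *m coefv P (m + U_(i1))) + (m i2).+1%:R *: (E i2 *m coefv P (m + U_(i2)))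
  + (m i3).+1%:R *: (E i3 *m coefv P (m + U_(i3))).
Proof.
apply/matrixP => r c; rewrite [c]ord1 /dirac /dx !mxE !sum_ord2 !mxE.
rewrite !mcoeffD !mcoeffCM !mcoeff_deriv ?mxE ?sum_ord2 ?mxE; ring.
Qed.

(* The Dirac equation gives e3 d3 P in terms of d1 P and d2 P, and e3 is invertible,
   so the x3-free part of a monogenic P determines P by induction on the x3-degree. *)
Lemma monogenic_eq0 {E} (E_cl : clifford_rel E) P : dirac E P = 0 ->
  (forall m : 'X_{1..3}, m i3 = 0%N -> coefv P m = 0) -> P = 0.
Proof.
move=> P_dirac P_x3free.
have coefv0 t (m : 'X_{1..3}) : m i3 = t -> coefv P m = 0.
  elim: t m => [|t IH] m m3; first exact: P_x3free.
  pose m' := (m - U_(i3))%MM.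
  have m_eq : m = (m' + U_(i3))%MM.
    apply/mnmP => i; rewrite mnmDE mnmBE mnm1E.
    by have [<-|_] := eqVneq i3 i; [rewrite m3 subn1 addn1 | rewrite /= addn0 subn0].
  have m'3 : m' i3 = t by rewrite mnmBE mnm1E m3 eqxx subn1.
  have := congr1 (coefv^~ m') P_dirac; rewrite coefv_dirac -m_eq.
  rewrite (IH (m' + U_(i1))%MM) ?(IH (m' + U_(i2))%MM) ?mnmDE ?mnm1E ?m'3 ?addn0 //.
  rewrite !mulmx0 !scaler0 !add0r => /(congr1 (mulmx (E i3))).
  have -> : coefv 0 m' = 0 by apply/matrixP => r c; rewrite !mxE mcoeff0.
  rewrite mulmx0 -scalemxAr mulmxA (clifford_sqr E_cl) mulNmx mul1mx scalerN.
  by move/eqP; rewrite oppr_eq0 scaler_eq0 pnatr_eq0 /= => /eqP.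
apply/matrixP => r c; rewrite [c]ord1; apply/mpolyP => m.
by have /matrixP/(_ r 0) := coefv0 _ m erefl; rewrite !mxE mcoeff0.
Qed.

Lemma ord2_cases (r : 'I_2) : r = 0 \/ r = 1.
Proof. by case: r => -[|[|//]] ?; [left | right]; apply/val_inj. Qed.

Section Coordinates.
Variable k : nat.

(* Index t stands for the coefficient of x1^(k - t/2) x2^(t/2) in the component t mod 2. *)
Definition coord_mono (t : 'I_(2 * k + 2)) : 'X_{1..3} :=
  [multinom (if i == i1 then (k - t./2)%N else if i == i2 then t./2 else 0%N) | i < 3].
Definition coord_comp (t : 'I_(2 * k + 2)) : 'I_2 := if odd t then 1 else 0.
Definition coord (P : SPol) : 'rV[algC]_(2 * k + 2) :=
  \row_t (P (coord_comp t) 0)@_(coord_mono t).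

Lemma coordB P Q : coord (P - Q) = coord P - coord Q.
Proof. by apply/matrixP => i t; rewrite !mxE mcoeffB. Qed.

Lemma Mk_coord_eq0 {E} (E_cl : clifford_rel E) P : Mk E k P -> coord P = 0 -> P = 0.
Proof.
move=> [P_hom P_dirac] coordP0; apply: (monogenic_eq0 E_cl) => // m m3.
apply/matrixP => r c; rewrite [c]ord1 !mxE.
have [m_deg|] := eqVneq (mdeg m) k; last exact: (dhomog_nemf_coeff (P_hom r 0)).
have {}m_deg : (m i1 + m i2)%N = k.
  rewrite -m_deg mdegE !big_ord_recl big_ord0 addn0 addnA.
  have -> : m (lift ord0 (lift ord0 ord0)) = m i3 by congr (m _); exact/val_inj.
  by rewrite m3 addn0; congr (m _ + m _); exact/val_inj.
have t_lt : (r + 2 * m i2 < 2 * k + 2)%N by move: (ltn_ord r); lia.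
have := congr1 (fun v : 'rV_(2 * k + 2) => v 0 (Ordinal t_lt)) coordP0; rewrite !mxE.
have -> : coord_comp (Ordinal t_lt) = r.
  by rewrite /coord_comp /= oddD oddM /=; case: (ord2_cases r) => ->.
suff -> : coord_mono (Ordinal t_lt) = m by [].
apply/mnmP => i; rewrite mnmE /=.
have half : ((r + 2 * m i2)./2 = m i2)%N by move: (ltn_ord r); lia.
rewrite half; case: i => -[|[|[|//]]] ? /=;
  [rewrite -m_deg addnK | | apply/esym; rewrite -[RHS]m3]; congr (m _); exact/val_inj.
Qed.

End Coordinates.

Section Basis.
Context {E : 'I_3 -> 'M[algC]_2} (E_cl : clifford_rel E).
Context {vp : 'cV[algC]_2} (vp_weight : (- 'i) *: (e2 E i1 i2 *m vp) = vp)
  (vp_neq0 : vp != 0) (k : nat).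

Lemma F_free (c : 'I_(2 * k + 2) -> algC) :
  \sum_(j < 2 * k + 2) scS (c j) (F E vp k j) = 0 -> forall j, c j = 0.
Proof.
have weight_inj : injective (fun j : nat => k%:R + 2^-1 - j%:R : algC).
  by move=> i j /addrI/oppr_inj/eqP; rewrite eqr_nat => /eqP.
have F_lt_neq0 j : (j < 2 * k + 2)%N -> F E vp k j != 0.
  by move=> j_lt; apply: (F_neq0 E_cl vp_weight vp_neq0); lia.
exact: (@eigenvectors_free _ _ _ _ (HtD E) (HtZ E) (Ht_F E_cl vp_weight k)
          weight_inj F_lt_neq0 _ (leqnn _) c).
Qed.

Definition Fmx : 'M[algC]_(2 * k + 2) := \matrix_(j, t) coord k (F E vp k j) 0 t.

Lemma coord_lincomb (c : 'rV[algC]_(2 * k + 2)) :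
  coord k (\sum_(j < 2 * k + 2) scS (c 0 j) (F E vp k j)) = c *m Fmx.
Proof.
apply/matrixP => i t; rewrite [i]ord1 !mxE summxE raddf_sum.
by apply: eq_bigr => j _; rewrite !mxE /= mcoeffCM.
Qed.

Lemma Fmx_unit : Fmx \in unitmx.
Proof.
rewrite -row_free_unit; apply: inj_row_free => c cF0.
have sum0 : \sum_(j < 2 * k + 2) scS (c 0 j) (F E vp k j) = 0.
  apply: (Mk_coord_eq0 k E_cl); last by rewrite coord_lincomb.
  by apply: Mk_sum => j; exact: F_Mk.
by apply/matrixP => i j; rewrite [i]ord1 mxE (F_free _ sum0).
Qed.

Lemma Mk_span P : Mk E k P -> exists c : 'I_(2 * k + 2) -> algC,
  P = \sum_(j < 2 * k + 2) scS (c j) (F E vp k j).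
Proof.
move=> P_Mk; pose w := coord k P *m invmx Fmx; exists (w 0).
apply/eqP; rewrite -subr_eq0; apply/eqP; apply: (Mk_coord_eq0 k E_cl).
  by apply: MkB => //; apply: Mk_sum => j; exact: F_Mk.
by rewrite coordB coord_lincomb mulmxKV ?Fmx_unit ?subrr.
Qed.

End Basis.

Theorem proposition3p1 (k : nat) (E : 'I_3 -> 'M[algC]_2) (vp : 'cV[algC]_2) :
  clifford_rel E ->
  vp != 0 ->
  (- 'i) *: (e2 E i1 i2 *m vp) = vp ->
  is_basis_of (Mk E k) (2 * k + 2) (F E vp k) /\
  (forall j, (j <= 2 * k + 1)%N ->
     Ht E (F E vp k j) = scS (k%:R + 2^-1 - j%:R) (F E vp k j)).
Proof.
move=> E_cl vp_neq0 vp_weight; split; last by move=> j _; exact: Ht_F.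
split; first by move=> j _; exact: F_Mk.
split; first exact: F_free.
exact: Mk_span.
Qed.
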